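(* Let $X$ be a Hausdorff Baire space which is developable and $\omega_1$-expandable. Then $dis(X) \geq \Delta(X)$.
   Context: All spaces are Hausdorff. $dis(X)$ denotes the least cardinal $\tau$ such that $X$ is the union of $\tau$ discrete subspaces. $\Delta(X)$ (the dispersion character of $X$) is the least cardinality of a non-empty open subset of $X$. For a collection $\mathcal{G}$ of subsets of $X$ and $x\in X$, $st(x,\mathcal{G})=\bigcup\{G\in\mathcal{G}: x\in G\}$ and $ord(x,\mathcal{G})=|\{G\in\mathcal{G}: x\in G\}|$. A sequence $\{\mathcal{G}_n:n\in\omega\}$ of open covers of $X$ is a development if $\{st(x,\mathcal{G}_n):n\in\omega\}$ is a local base at $x$ for every $x\in X$; $X$ is developable if it admits a development. For a cardinal $\kappa$, $X$ is $\kappa$-expandable if for every closed discrete set $D\subseteq X$ there is a family $\mathcal{G}=\{U_d: d\in D\}$ of open sets with $U_d\cap D=\{d\}$ for each $d\in D$ and $ord(x,\mathcal{G})\leq\kappa$ for every $x\in X$. *)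

From Stdlib Require Import Classical.

Definition set (T : Type) := T -> Prop.
Definition subset {T} (A B : set T) := forall x, A x -> B x.

Record topology (T : Type) := {
  is_open : set T -> Prop;
  open_full : is_open (fun _ => True);
  open_empty : is_open (fun _ => False);
  open_inter : forall A B, is_open A -> is_open B -> is_open (fun x => A x /\ B x);
  open_union : forall (F : set (set T)), (forall A, F A -> is_open A) ->
                 is_open (fun x => exists A, F A /\ A x)
}.
Arguments is_open {T} t A.

Section Topo.
Context {T : Type} (tau : topology T).

Definition is_closed (A : set T) := is_open tau (fun x => ~ A x).

Definition hausdorff := forall x y, x <> y ->
  exists U V, is_open tau U /\ is_open tau V /\ U x /\ V y /\
              (forall z, U z -> V z -> False).

Definition dense (A : set T) :=
  forall U, is_open tau U -> (exists x, U x) -> exists x, U x /\ A x.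

Definition baire := forall G : nat -> set T,
  (forall n, is_open tau (G n) /\ dense (G n)) ->
  dense (fun x => forall n, G n x).

Definition discrete (D : set T) :=
  forall d, D d -> exists U, is_open tau U /\ U d /\ (forall y, U y -> D y -> y = d).

Definition closed_discrete (D : set T) := is_closed D /\ discrete D.

Definition star (x : T) (G : set (set T)) : set T := fun y => exists A, G A /\ A x /\ A y.

Definition open_cover (G : set (set T)) :=
  (forall A, G A -> is_open tau A) /\ (forall x, exists A, G A /\ A x).

Definition development (G : nat -> set (set T)) :=
  (forall n, open_cover (G n)) /\
  (forall x U, is_open tau U -> U x -> exists n, subset (star x (G n)) U).

Definition developable := exists G, development G.

End Topo.

Definition countable {A : Type} (S : set A) :=
  exists f : {y : A | S y} -> nat, forall a b, f a = f b -> a = b.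

(* |S| <= omega_1: S admits a (strict) well-ordering all of whose proper
   initial segments are countable (i.e. its order type is <= omega_1). *)
Definition card_le_omega1 {A : Type} (S : set A) :=
  exists R : A -> A -> Prop,
    (forall x, S x -> ~ R x x) /\
    (forall x y z, S x -> S y -> S z -> R x y -> R y z -> R x z) /\
    (forall x y, S x -> S y -> x = y \/ R x y \/ R y x) /\
    (forall P : set A, (exists x, S x /\ P x) ->
        exists m, S m /\ P m /\ forall y, S y -> P y -> ~ R y m) /\
    (forall x, S x -> countable (fun y => S y /\ R y x)).

(* Since
   U_d ∩ D = {d}, the U_d are pairwise distinct, so ord(x,{U_d}) is the
   cardinality of {d in D | x in U_d}. *)
Definition omega1_expandable {T} (tau : topology T) :=
  forall D : set T, closed_discrete tau D ->
  exists U : T -> set T,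
    (forall d, D d -> is_open tau (U d) /\ U d d /\ (forall y, U d y -> D y -> y = d)) /\
    (forall x, card_le_omega1 (fun d => D d /\ U d x)).

From Stdlib Require Import Classical ClassicalEpsilon FunctionalExtensionality
  PropExtensionality ProofIrrelevance Cantor.
From mathcomp Require boolp classical_sets.
Set Bullet Behavior "Strict Subproofs".

(* Let X be covered by discrete sets D_i (i in I) and let (G_n) be a
   development.  The layers E(i,n) = {d in D_i | st(d, G_n) meets D_i only in d}
   are closed discrete and cover X.
   - If I is countable, Baire's theorem makes some E(i,n) dense in a nonempty
     open set V, so V is contained in the closed set E(i,n); a point of that
     layer is then isolated in X.
   - If I is uncountable, fix omega_1-expansions U(i,n) of the layers and
     refine the layers by the condition st(d, G_k) included in U(i,n)(d).
     Baire's theorem gives (n,k), a nonempty open V and x in V such that the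
     refined (n,k)-layer is dense in W = V ∩ st(x, G_k); its points d there
     satisfy x in U(i,n)(d), so they number at most omega_1 * |I| = |I|, and
     every point of W is recovered from such a point, so |W| <= |I|. *)

Definition inj (X Y : Type) := exists f : X -> Y, forall a b, f a = f b -> a = b.

Lemma inj_refl X : inj X X.
Proof. exists (fun x => x); auto. Qed.

Lemma inj_trans X Y Z : inj X Y -> inj Y Z -> inj X Z.
Proof. intros [f Hf] [g Hg]. exists (fun x => g (f x)); auto. Qed.

Lemma inj_prod X X' Y Y' : inj X X' -> inj Y Y' -> inj (X * Y) (X' * Y').
Proof.
  intros [f Hf] [g Hg]. exists (fun p => (f (fst p), g (snd p))).
  intros [a b] [c d] H; simpl in H. injection H; intros; f_equal; auto.
Qed.

Lemma inj_sigma X (P : X -> Type) Y : (forall x, inj (P x) Y) -> inj {x : X & P x} (X * Y).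
Proof.
  intro H. set (f x := constructive_indefinite_description _ (H x)).
  exists (fun s => (projT1 s, proj1_sig (f (projT1 s)) (projT2 s))).
  intros [x a] [y b] E; simpl in E. injection E; intros E2 E1. subst y.
  f_equal. apply (proj2_sig (f x)). exact E2.
Qed.

Lemma sig_eq {A} (P : A -> Prop) (a b : {x | P x}) : proj1_sig a = proj1_sig b -> a = b.
Proof. destruct a, b; simpl; intros; subst; f_equal; apply proof_irrelevance. Qed.

Lemma inj_sub A (P : A -> Prop) : inj {x | P x} A.
Proof. exists (@proj1_sig _ _). apply sig_eq. Qed.

Lemma inj_nat_nat : inj (nat * nat) nat.
Proof. exists Cantor.to_nat. exact Cantor.to_nat_inj. Qed.

Lemma set_ext {A} (B C : A -> Prop) : (forall x, B x -> C x) -> (forall x, C x -> B x) -> B = C.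
Proof.
  intros; apply functional_extensionality; intro; apply propositional_extensionality; split; auto.
Qed.

Lemma zorn (P : Type) (p0 : P) (le : P -> P -> Prop) :
  (forall x, le x x) -> (forall x y z, le x y -> le y z -> le x z) ->
  (forall C : P -> Prop, (forall x y, C x -> C y -> le x y \/ le y x) ->
     exists u, forall x, C x -> le x u) ->
  exists m, forall y, le m y -> le y m.
Proof.
  intros Hrefl Htrans Hchain.
  destruct (@classical_sets.ZL_preorder P p0 (fun x y => boolp.asbool (le x y)))
    as [m Hm].
  - intro x; rewrite boolp.asboolE; auto.
  - intros x y z; rewrite !boolp.asboolE; apply Htrans.
  - intros C HC. destruct (Hchain C) as [u Hu].
    + intros x y Cx Cy. specialize (HC x y Cx Cy). cbv beta in HC.
      rewrite !boolp.asboolE in HC. exact HC.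
    + exists u; intros x Cx; rewrite boolp.asboolE; auto.
  - exists m; intros y Hy. specialize (Hm y).
    unfold classical_sets.premaximal in Hm. cbv beta in Hm.
    rewrite !boolp.asboolE in Hm. auto.
Qed.

Definition partial_injection {X Y} (R : X -> Y -> Prop) :=
  (forall x y y', R x y -> R x y' -> y = y') /\ (forall x x' y, R x y -> R x' y -> x = x').

Lemma partial_injection_union X Y (P : Type) (C : P -> Prop) (F : P -> X -> Y -> Prop) :
  (forall p, C p -> partial_injection (F p)) ->
  (forall p q, C p -> C q -> (forall x y, F p x y -> F q x y) \/ (forall x y, F q x y -> F p x y)) ->
  partial_injection (fun x y => exists p, C p /\ F p x y).
Proof.
  intros HF HC. split.
  - intros x y y' [p [Hp H1]] [q [Hq H2]].
    destruct (HC p q Hp Hq) as [H|H].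
    + apply (proj1 (HF q Hq) x); auto.
    + apply (proj1 (HF p Hp) x); auto.
  - intros x x' y [p [Hp H1]] [q [Hq H2]].
    destruct (HC p q Hp Hq) as [H|H].
    + apply (proj2 (HF q Hq) x x' y); auto.
    + apply (proj2 (HF p Hp) x x' y); auto.
Qed.

(* Cardinals are linearly ordered: a maximal partial injection is either
   total or surjective. *)
Lemma comparable (X Y : Type) : inj X Y \/ inj Y X.
Proof.
  set (PP := {R : X -> Y -> Prop | partial_injection R}).
  set (le := fun p q : PP => forall x y, proj1_sig p x y -> proj1_sig q x y).
  assert (empty : partial_injection (fun (_ : X) (_ : Y) => False)).
  { split; intros; contradiction. }
  destruct (zorn PP (exist _ _ empty) le) as [[R [Hfun Hinj]] Hmax].
  - intros p x y H; exact H.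
  - intros p q r H1 H2 x y H; auto.
  - intros C HC.
    exists (exist _ _ (partial_injection_union X Y PP C (@proj1_sig _ _)
                         (fun p _ => proj2_sig p) HC)).
    intros p Hp x y H. exists p. auto.
  - simpl in Hmax.
    destruct (classic (forall x, exists y, R x y)) as [Htot|Htot].
    { left. destruct (choice _ Htot) as [f Hf]. exists f. intros a b E.
      apply (Hinj a b (f a)); auto. rewrite E; auto. }
    destruct (classic (forall y, exists x, R x y)) as [Hsurj|Hsurj].
    { right. destruct (choice _ Hsurj) as [g Hg]. exists g. intros a b E.
      apply (Hfun (g a)); auto. rewrite E; auto. }
    (* Otherwise a point x1 outside the domain can be matched with a point y0
       outside the range, contradicting maximality. *)
    exfalso.
    apply not_all_ex_not in Htot. destruct Htot as [x1 Hx1].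
    apply not_all_ex_not in Hsurj. destruct Hsurj as [y0 Hy0].
    set (R' := fun x y => R x y \/ (x = x1 /\ y = y0)).
    assert (HR' : partial_injection R').
    { split.
      - intros x y y' [H1|[H1 H2]] [H3|[H3 H4]]; subst; eauto;
          exfalso; apply Hx1; eauto.
      - intros x x' y [H1|[H1 H2]] [H3|[H3 H4]]; subst; eauto;
          exfalso; apply Hy0; eauto. }
    apply Hx1. exists y0.
    apply (Hmax (exist _ R' HR')); simpl.
    + intros x y Hxy; left; auto.
    + right; auto.
Qed.

Lemma inj_split X (P : X -> Prop) Y Z :
  inj {x | P x} Y -> inj {x | ~ P x} Z -> inj X (Y + Z).
Proof.
  intros [f Hf] [g Hg].
  exists (fun x => match excluded_middle_informative (P x) with
                   | left p => inl (f (exist _ x p))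
                   | right n => inr (g (exist _ x n)) end).
  intros a b.
  destruct (excluded_middle_informative (P a)); destruct (excluded_middle_informative (P b));
    intro E; try discriminate; injection E; intro E'.
  - apply Hf in E'. exact (f_equal (@proj1_sig _ _) E').
  - apply Hg in E'. exact (f_equal (@proj1_sig _ _) E').
Qed.

Lemma inj_sum_self Z : inj nat Z -> inj (Z * Z) Z -> inj (Z + Z) Z.
Proof.
  intros [e He] [g Hg].
  exists (fun p => match p with inl z => g (z, e 0) | inr z => g (z, e 1) end).
  intros [a|a] [b|b] H; apply Hg in H.
  - injection H; intros; subst; auto.
  - injection H; intros H1 _. apply He in H1. discriminate.
  - injection H; intros H1 _. apply He in H1. discriminate.
  - injection H; intros; subst; auto.
Qed.

Section InfiniteSquare.
Variable A : Type.

Record squaring (S : set A) (R : A -> A -> A -> Prop) : Prop := {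
  sq_total : forall x y, S x -> S y -> exists z, R x y z;
  sq_range : forall x y z, R x y z -> S x /\ S y /\ S z;
  sq_fun : forall x y z z', R x y z -> R x y z' -> z = z';
  sq_inj : forall x y x' y' z, R x y z -> R x' y' z -> x = x' /\ y = y' }.

Definition extends (p q : set A * (A -> A -> A -> Prop)) :=
  subset (fst p) (fst q) /\ forall x y z, snd p x y z -> snd q x y z.

Lemma extends_refl p : extends p p.
Proof. split; [intros x H | intros x y z H]; exact H. Qed.

Lemma extends_trans p q r : extends p q -> extends q r -> extends p r.
Proof. intros [H1 H2] [H3 H4]; split; [intros x H | intros x y z H]; auto. Qed.

Lemma squaring_inj S R : squaring S R -> inj ({x | S x} * {x | S x}) {x | S x}.
Proof.
  intros [Htot Hrange Hfun Hinj].
  assert (Ht : forall p : {x | S x} * {x | S x},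
    exists z : {x | S x}, R (proj1_sig (fst p)) (proj1_sig (snd p)) (proj1_sig z)).
  { intros [[x Hx] [y Hy]]. simpl. destruct (Htot x y Hx Hy) as [z Hz].
    exists (exist _ z (proj2 (proj2 (Hrange _ _ _ Hz)))). exact Hz. }
  destruct (choice _ Ht) as [f Hf]. exists f.
  intros [a b] [c d] E. assert (H1 := Hf (a, b)). assert (H2 := Hf (c, d)).
  rewrite E in H1. simpl in H1, H2. destruct (Hinj _ _ _ _ _ H1 H2).
  f_equal; apply sig_eq; auto.
Qed.

Lemma squaring_union (P : Type) (C : P -> Prop) (F : P -> set A * (A -> A -> A -> Prop)) :
  (forall p, C p -> squaring (fst (F p)) (snd (F p))) ->
  (forall p q, C p -> C q -> extends (F p) (F q) \/ extends (F q) (F p)) ->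
  squaring (fun x => exists p, C p /\ fst (F p) x)
           (fun x y z => exists p, C p /\ snd (F p) x y z).
Proof.
  intros Hsq Hchain. split.
  - intros x y [p [Hp Hx]] [q [Hq Hy]].
    destruct (Hchain p q Hp Hq) as [[H1 _]|[H1 _]].
    + destruct (sq_total _ _ (Hsq q Hq) x y) as [z Hz]; auto. exists z, q; auto.
    + destruct (sq_total _ _ (Hsq p Hp) x y) as [z Hz]; auto. exists z, p; auto.
  - intros x y z [p [Hp H]]. destruct (sq_range _ _ (Hsq p Hp) x y z H) as [A1 [A2 A3]].
    split; [|split]; exists p; auto.
  - intros x y z z' [p [Hp H]] [q [Hq H']].
    destruct (Hchain p q Hp Hq) as [[_ H1]|[_ H1]].
    + apply (sq_fun _ _ (Hsq q Hq) x y); auto.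
    + apply (sq_fun _ _ (Hsq p Hp) x y); auto.
  - intros x y x' y' z [p [Hp H]] [q [Hq H']].
    destruct (Hchain p q Hp Hq) as [[_ H1]|[_ H1]].
    + apply (sq_inj _ _ (Hsq q Hq) x y x' y' z); auto.
    + apply (sq_inj _ _ (Hsq p Hp) x y x' y' z); auto.
Qed.

Definition new_pairs (S S' : set A) :=
  {xy : A * A | S' (fst xy) /\ S' (snd xy) /\ ~ (S (fst xy) /\ S (snd xy))}.

Lemma squaring_extend S R S' (k : new_pairs S S' -> A) :
  squaring S R -> subset S S' -> (forall q q', k q = k q' -> q = q') ->
  (forall q, S' (k q) /\ ~ S (k q)) ->
  squaring S' (fun x y z => R x y z \/ exists q, proj1_sig q = (x, y) /\ z = k q).
Proof.
  intros [Htot Hrange Hfun Hinj] HSS' Hk Hknew.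
  split.
  - intros x y Hx Hy. destruct (classic (S x /\ S y)) as [[H1 H2]|H].
    + destruct (Htot x y H1 H2) as [z Hz]. exists z; left; auto.
    + set (q := exist _ (x, y) (conj Hx (conj Hy H)) : new_pairs S S').
      exists (k q). right. exists q. split; reflexivity.
  - intros x y z [H|[q [Hq Hz]]].
    + destruct (Hrange _ _ _ H) as [A1 [A2 A3]]. auto.
    + destruct (proj2_sig q) as [Ha [Hb _]]. rewrite Hq in Ha, Hb. subst z.
      split; [|split]; auto. apply Hknew.
  - intros x y z z' [H|[q [Hq Hz]]] [H'|[q' [Hq' Hz']]].
    + eauto.
    + exfalso. destruct (proj2_sig q') as [_ [_ Hn]]. rewrite Hq' in Hn.
      apply Hn. simpl. destruct (Hrange _ _ _ H); tauto.
    + exfalso. destruct (proj2_sig q) as [_ [_ Hn]]. rewrite Hq in Hn.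
      apply Hn. simpl. destruct (Hrange _ _ _ H'); tauto.
    + subst. f_equal. apply sig_eq. congruence.
  - intros x y x' y' z [H|[q [Hq Hz]]] [H'|[q' [Hq' Hz']]].
    + eauto.
    + exfalso. subst. apply (Hknew q'). apply (Hrange _ _ _ H).
    + exfalso. subst. apply (Hknew q). apply (Hrange _ _ _ H').
    + subst. apply Hk in Hz'. subst. rewrite Hq in Hq'. injection Hq'; auto.
Qed.

Lemma squaring_not_maximal S R :
  squaring S R -> inj nat {x | S x} -> inj {x | S x} {x | ~ S x} ->
  exists S' R', squaring S' R' /\ extends (S, R) (S', R') /\ exists x, S' x /\ ~ S x.
Proof.
  intros Hsq HnS [h Hh].
  set (SS := {x | S x}).
  assert (HSS : inj (SS * SS) SS) by (apply squaring_inj with R; exact Hsq).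
  assert (H2S : inj (SS + SS) SS) by (apply inj_sum_self; auto).
  set (S' := fun x => S x \/ exists s, proj1_sig (h s) = x).
  assert (HS' : inj {x | S' x} (SS + SS)).
  { apply (inj_split _ (fun q => S (proj1_sig q))).
    - exists (fun q => exist S (proj1_sig (proj1_sig q)) (proj2_sig q)).
      intros a b E. do 2 apply sig_eq. exact (f_equal (@proj1_sig _ _) E).
    -
      assert (Hc : forall q : {q : {x | S' x} | ~ S (proj1_sig q)},
                   exists s, proj1_sig (h s) = proj1_sig (proj1_sig q)).
      { intros [[x [Hx|Hx]] Hn]; simpl in *; [contradiction | exact Hx]. }
      destruct (choice _ Hc) as [c Hcq]. exists c.
      intros a b E. do 2 apply sig_eq. rewrite <- Hcq, <- Hcq, E. reflexivity. }
  assert (HQ : inj (new_pairs S S') SS).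
  { apply (inj_trans _ ({x | S' x} * {x | S' x})).
    - exists (fun q => (exist S' (fst (proj1_sig q)) (proj1 (proj2_sig q)),
                        exist S' (snd (proj1_sig q)) (proj1 (proj2 (proj2_sig q))))).
      intros [[a b] Ha] [[c d] Hc] E. injection E; intros. apply sig_eq; simpl. subst; auto.
    - apply (inj_trans _ (SS * SS)); auto.
      apply inj_prod; apply (inj_trans _ (SS + SS)); auto. }
  destruct HQ as [k0 Hk0].
  destruct HnS as [e _].
  exists S', (fun x y z => R x y z \/ exists q, proj1_sig q = (x, y) /\
                                               z = proj1_sig (h (k0 q))).
  split; [|split].
  - apply squaring_extend; auto.
    + intros x Hx; left; auto.
    + intros q q' E. apply Hk0, Hh, sig_eq. exact E.
    + intro q. split; [right; exists (k0 q); auto | exact (proj2_sig (h (k0 q)))].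
  - split; simpl; intros; left; auto.
  - exists (proj1_sig (h (e 0))). split; [right; eauto | exact (proj2_sig (h (e 0)))].
Qed.

Lemma seed_squaring (e : nat -> A) : (forall a b, e a = e b -> a = b) ->
  squaring (fun x => exists n, x = e n)
           (fun x y z => exists n m, x = e n /\ y = e m /\ z = e (Cantor.to_nat (n, m))).
Proof.
  intro He. split.
  - intros x y [n Hn] [m Hm]. exists (e (Cantor.to_nat (n, m))). exists n, m; auto.
  - intros x y z [n [m [H1 [H2 H3]]]].
    split; [exists n | split; [exists m | exists (Cantor.to_nat (n, m))]]; auto.
  - intros x y z z' [n [m [H1 [H2 H3]]]] [n' [m' [H1' [H2' H3']]]]. subst.
    apply He in H1'. apply He in H2'. subst; auto.
  - intros x y x' y' z [n [m [H1 [H2 H3]]]] [n' [m' [H1' [H2' H3']]]]. subst.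
    apply He, Cantor.to_nat_inj in H3'. injection H3'; intros; subst; auto.
Qed.

(* A maximal infinite partial squaring S leaves a complement smaller than S,
   so A embeds in S + S and |A * A| <= |S * S| <= |S| <= |A|. *)
Lemma maximal_squaring S R :
  squaring S R -> inj nat {x | S x} ->
  (forall S' R', squaring S' R' -> extends (S, R) (S', R') -> subset S' S) ->
  inj (A * A) A.
Proof.
  intros Hsq HnS Hmax.
  set (SS := {x | S x}).
  assert (HSS : inj (SS * SS) SS) by (apply squaring_inj with R; exact Hsq).
  assert (H2S : inj (SS + SS) SS) by (apply inj_sum_self; auto).
  destruct (comparable {x | ~ S x} SS) as [Hsmall|Hbig].
  - assert (HA : inj A (SS + SS)) by (apply (inj_split _ S); [apply inj_refl | exact Hsmall]).
    apply (inj_trans _ (SS * SS)).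
    + apply inj_prod; apply (inj_trans _ (SS + SS)); auto.
    + apply (inj_trans _ SS); auto. apply inj_sub.
  - exfalso.
    destruct (squaring_not_maximal S R Hsq HnS Hbig) as [S' [R' [Hsq' [Hext [x [Hx Hnx]]]]]].
    exact (Hnx (Hmax S' R' Hsq' Hext x Hx)).
Qed.

(* Hessenberg: |A x A| = |A| for every infinite A, by Zorn's lemma applied to
   the partial squarings extending the seed. *)
Lemma inf_square : inj nat A -> inj (A * A) A.
Proof.
  intros [e He].
  set (p0 := (fun x => exists n, x = e n,
              fun x y z => exists n m, x = e n /\ y = e m /\ z = e (Cantor.to_nat (n, m)))).
  set (PP := {p | squaring (fst p) (snd p) /\ extends p0 p}).
  set (q0 := exist _ p0 (conj (seed_squaring e He) (extends_refl _)) : PP).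
  destruct (zorn PP q0 (fun p q => extends (proj1_sig p) (proj1_sig q))) as [m Hmax].
  - intro p; apply extends_refl.
  - intros p q r; apply extends_trans.
  - intros C HC.
    (* The seed is added so that the union also extends it when C is empty. *)
    set (C' := fun p => C p \/ p = q0).
    assert (HC' : forall p q, C' p -> C' q -> extends (proj1_sig p) (proj1_sig q) \/
                                               extends (proj1_sig q) (proj1_sig p)).
    { intros p q [Hp|Hp] [Hq|Hq]; subst; auto.
      - right; exact (proj2 (proj2_sig p)).
      - left; exact (proj2 (proj2_sig q)).
      - left; apply extends_refl. }
    assert (Hu := squaring_union PP C' (@proj1_sig _ _) (fun p _ => proj1 (proj2_sig p)) HC').
    assert (Hext : extends p0 (fun x => exists p, C' p /\ fst (proj1_sig p) x,
                               fun x y z => exists p, C' p /\ snd (proj1_sig p) x y z)).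
    { split; [intros x H | intros x y z H]; exists q0; split; auto; right; reflexivity. }
    exists (exist _ (_, _) (conj Hu Hext) : PP).
    intros p Hp. split; [intros x H | intros x y z H]; exists p; split; auto; left; auto.
  - destruct m as [[S R] Hm]. simpl in Hmax. destruct Hm as [Hsq Hseed]. simpl in Hsq.
    apply (maximal_squaring S R Hsq).
    + exists (fun n => exist S (e n) (proj1 Hseed _ (ex_intro _ n eq_refl))).
      intros a b H. apply He. exact (f_equal (@proj1_sig _ _) H).
    + intros S' R' Hsq' Hext.
      exact (proj1 (Hmax (exist _ (S', R') (conj Hsq' (extends_trans _ _ _ Hseed Hext))) Hext)).
Qed.

End InfiniteSquare.

Lemma inj_sub_mono A (P Q : A -> Prop) : (forall x, P x -> Q x) -> inj {x | P x} {x | Q x}.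
Proof.
  intro H. exists (fun x => exist Q (proj1_sig x) (H _ (proj2_sig x))).
  intros a b E. apply sig_eq. exact (f_equal (@proj1_sig _ _) E).
Qed.

Lemma inj_sub_sub A (P Q : A -> Prop) : inj {y : {x | P x} | Q (proj1_sig y)} {x | Q x}.
Proof.
  exists (fun y => exist Q (proj1_sig (proj1_sig y)) (proj2_sig y)).
  intros a b E. do 2 apply sig_eq. exact (f_equal (@proj1_sig _ _) E).
Qed.

Lemma union_inj (X P I : Type) (Q : P -> X -> Prop) :
  inj (I * I) I -> inj P I -> (forall p, inj {x | Q p x} I) ->
  (forall x, exists p, Q p x) -> inj X I.
Proof.
  intros HII HP HQ Hcov. destruct (choice _ Hcov) as [pf Hpf].
  apply (inj_trans _ {p : P & {x | Q p x}}).
  - exists (fun x => existT _ (pf x) (exist _ x (Hpf x))).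
    intros a b E. exact (f_equal (fun s => proj1_sig (projT2 s)) E).
  - apply (inj_trans _ (P * I)); [apply inj_sigma; exact HQ|].
    apply (inj_trans _ (I * I)); auto. apply inj_prod; auto using inj_refl.
Qed.

Lemma uncountable_infinite I : ~ inj I nat -> inj nat I.
Proof. intro H. destruct (comparable I nat); [contradiction | assumption]. Qed.

Lemma countable_add_point {A} (P : A -> Prop) (a : A) :
  inj {y | P y} nat -> inj {y | y = a \/ P y} nat.
Proof.
  intros [f Hf].
  assert (Hq : forall y : {y | y = a \/ P y}, proj1_sig y <> a -> P (proj1_sig y)).
  { intros [y [Hy|Hy]] Hn; simpl in *; [contradiction | auto]. }
  exists (fun y => match excluded_middle_informative (proj1_sig y = a) with
                   | left _ => 0
                   | right n => S (f (exist _ _ (Hq y n))) end).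
  intros y1 y2.
  destruct (excluded_middle_informative (proj1_sig y1 = a));
  destruct (excluded_middle_informative (proj1_sig y2 = a)); intro E; try discriminate.
  - apply sig_eq. congruence.
  - injection E; intro E'. apply Hf in E'. apply sig_eq. exact (f_equal (@proj1_sig _ _) E').
Qed.

(* For uncountable I, every set of size at most omega_1 injects into I: if
   instead I injects into S via g, every point of S lies below some g b (the
   part of S below a point is countable), so S is a union of |I| countable
   initial segments. *)
Lemma omega1_inj (I A : Type) (S : set A) :
  ~ inj I nat -> card_le_omega1 S -> inj {x | S x} I.
Proof.
  intros HnI [R [_ [_ [Htri [_ Hcnt]]]]].
  assert (HnatI : inj nat I) by (apply uncountable_infinite, HnI).
  destruct (comparable {x | S x} I) as [H|[g Hg]]; [exact H|].
  set (below b y := y = proj1_sig (g b) \/ (S y /\ R y (proj1_sig (g b)))).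
  assert (Hbound : forall x : {x | S x}, exists b, below b (proj1_sig x)).
  { intro x. apply NNPP; intro Hn. apply HnI.
    assert (Hseg : forall i, S (proj1_sig (g i)) /\ R (proj1_sig (g i)) (proj1_sig x)).
    { intro i. split; [exact (proj2_sig (g i))|].
      destruct (Htri (proj1_sig (g i)) (proj1_sig x) (proj2_sig (g i)) (proj2_sig x))
        as [E|[E|E]]; auto; exfalso; apply Hn; exists i; [left | right]; auto.
      split; [exact (proj2_sig x) | exact E]. }
    destruct (Hcnt (proj1_sig x) (proj2_sig x)) as [f Hf].
    exists (fun i => f (exist _ (proj1_sig (g i)) (Hseg i))).
    intros a b E. apply Hf in E. apply Hg, sig_eq. exact (f_equal (@proj1_sig _ _) E). }
  apply (union_inj _ I I (fun b x => below b (proj1_sig x))); auto using inj_refl.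
  - apply inf_square; exact HnatI.
  - intro b. apply (inj_trans _ {y | below b y}); [apply inj_sub_sub|].
    apply (inj_trans _ nat); [|exact HnatI].
    apply countable_add_point, Hcnt, (proj2_sig (g b)).
Qed.

Section Topology.
Context {T : Type} (tau : topology T).

Lemma open_of_local (C : set T) :
  (forall x, C x -> exists V, is_open tau V /\ V x /\ subset V C) -> is_open tau C.
Proof.
  intro H.
  assert (E : (fun x => exists A, (fun V => is_open tau V /\ subset V C) A /\ A x) = C).
  { apply set_ext.
    - intros x [A [[_ HA] Hx]]. auto.
    - intros x Hx. destruct (H x Hx) as [V [HV [Vx HVC]]]. exists V. auto. }
  rewrite <- E. apply open_union. intros A [HA _]; auto.
Qed.

Lemma star_open (Gn : set (set T)) x : open_cover tau Gn -> is_open tau (star x Gn).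
Proof.
  intros [Ho _]. apply open_of_local. intros y [A [HA [Ax Ay]]].
  exists A. split; [auto | split; auto]. intros z Hz. exists A; auto.
Qed.

Lemma star_self (Gn : set (set T)) x : open_cover tau Gn -> star x Gn x.
Proof. intros [_ Hc]. destruct (Hc x) as [A [HA Ax]]. exists A; auto. Qed.

Lemma star_sym (Gn : set (set T)) x y : star x Gn y -> star y Gn x.
Proof. intros [A [H1 [H2 H3]]]. exists A; auto. Qed.

Definition isolated_layer (D : set T) (Gn : set (set T)) : set T :=
  fun d => D d /\ forall y, star d Gn y -> D y -> y = d.

(* Each layer is closed discrete: a member of the cover Gn contains at most one
   point of the layer, and Hausdorffness separates x from that point. *)
Lemma layer_closed_discrete (D : set T) (Gn : set (set T)) :
  hausdorff tau -> open_cover tau Gn -> closed_discrete tau (isolated_layer D Gn).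
Proof.
  intros Hh Hc.
  assert (Hmember : forall x, exists A, A x /\ is_open tau A /\
     forall d d', A d -> A d' -> isolated_layer D Gn d -> isolated_layer D Gn d' -> d = d').
  { intro x. destruct (proj2 Hc x) as [A [HA Ax]]. exists A.
    split; [auto | split; [apply (proj1 Hc); auto |]].
    intros d d' Ad Ad' [Dd Hd] [Dd' Hd']. apply Hd'; auto. exists A; auto. }
  split.
  - apply open_of_local. intros x Hx. destruct (Hmember x) as [A [Ax [Ao HA]]].
    destruct (classic (exists d, A d /\ isolated_layer D Gn d)) as [[d [Ad Hd]]|Hn].
    + assert (Hxd : x <> d) by (intro; subst; contradiction).
      destruct (Hh x d Hxd) as [U [V [Uo [Vo [Ux [Vd Hdisj]]]]]].
      exists (fun y => A y /\ U y). split; [apply open_inter; auto | split; [auto |]].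
      intros y [Ay Uy] Hy. assert (y = d) by (apply HA; auto). subst. eauto.
    + exists A. split; [auto | split; [auto |]]. intros y Ay Hy. apply Hn. eauto.
  - intros d Hd. destruct (Hmember d) as [A [Ad [Ao HA]]].
    exists A. split; [auto | split; [auto |]]. intros y Ay Hy. apply HA; auto.
Qed.

Lemma layer_cover (D : set T) (G : nat -> set (set T)) d :
  discrete tau D -> development tau G -> D d -> exists n, isolated_layer D (G n) d.
Proof.
  intros Hd [_ HG] Dd. destruct (Hd d Dd) as [U [Uo [Ud HU]]].
  destruct (HG d U Uo Ud) as [n Hn]. exists n. split; auto.
Qed.

Definition dense_in (V M : set T) :=
  forall O, is_open tau O -> (exists x, O x /\ V x) -> exists x, O x /\ V x /\ M x.

Lemma dense_in_closed (V M : set T) : is_closed tau M -> dense_in V M -> subset V M.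
Proof.
  intros HM HV z Vz. apply NNPP; intro Hz.
  destruct (HV _ HM (ex_intro _ z (conj Hz Vz))) as [x [Hx [_ Mx]]]. auto.
Qed.

Lemma dense_in_restrict (V M O : set T) :
  dense_in V M -> is_open tau O -> dense_in (fun x => V x /\ O x) M.
Proof.
  intros HV Oo O' O'o [x [O'x [Vx Ox]]].
  destruct (HV (fun y => O' y /\ O y)) as [y [[O'y Oy] [Vy My]]].
  - apply open_inter; auto.
  - exists x; auto.
  - exists y; auto.
Qed.

Lemma baire_nat_cover (x0 : T) : baire tau -> forall M : nat -> set T,
  (forall x, exists n, M n x) ->
  exists n V, is_open tau V /\ (exists x, V x) /\ dense_in V (M n).
Proof.
  intros Hb M Hcov. apply NNPP; intro Hn.
  set (outside n x := exists O, is_open tau O /\ O x /\ forall y, O y -> ~ M n y).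
  assert (HG : forall n, is_open tau (outside n) /\ dense tau (outside n)).
  { intro n. split.
    - apply open_of_local. intros x [O [Oo [Ox HO]]]. exists O. split; [auto | split; [auto |]].
      intros y Oy. exists O; auto.
    - intros U Uo [u Uu]. apply NNPP; intro Hn2. apply Hn. exists n, U.
      split; [auto | split; [eauto |]]. intros O Oo [x [Ox Ux]].
      apply NNPP; intro Hn3. apply Hn2. exists x. split; auto.
      exists (fun y => O y /\ U y). split; [apply open_inter; auto | split; [auto |]].
      intros y [Oy Uy] My. apply Hn3. exists y; auto. }
  destruct (Hb outside HG (fun _ => True) (open_full _ tau) (ex_intro _ x0 I))
    as [x [_ Hx]].
  destruct (Hcov x) as [n Hnx]. destruct (Hx n) as [O [_ [Ox HO]]]. apply (HO x); auto.
Qed.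

Lemma baire_countable_cover (x0 : T) (J : Type) (M : J -> set T) :
  baire tau -> inj J nat -> (forall x, exists j, M j x) ->
  exists j V, is_open tau V /\ (exists x, V x) /\ dense_in V (M j).
Proof.
  intros Hb [enc Henc] Hcov.
  destruct (baire_nat_cover x0 Hb (fun n x => exists j, enc j = n /\ M j x))
    as [n [V [Vo [[v Vv] HV]]]].
  { intro x. destruct (Hcov x) as [j Hj]. exists (enc j), j. auto. }
  destruct (HV V Vo (ex_intro _ v (conj Vv Vv))) as [y [_ [_ [j [Hj _]]]]].
  exists j, V. split; [auto | split; [eauto |]].
  intros O Oo HO. destruct (HV O Oo HO) as [z [Oz [Vz [j' [Hj' Mz]]]]].
  rewrite <- Hj in Hj'. apply Henc in Hj'. subst j'. eauto.
Qed.

Definition expansion (E : set T) (U : T -> set T) :=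
  (forall d, E d -> is_open tau (U d) /\ U d d /\ (forall y, U d y -> E y -> y = d)) /\
  (forall x, card_le_omega1 (fun d => E d /\ U d x)).

End Topology.

Section Dispersion.
Context {T : Type} (tau : topology T) (x0 : T).
Hypothesis baire_tau : baire tau.
Variable G : nat -> set (set T).
Hypothesis development_G : development tau G.
Variables (I : Type) (D : I -> set T).
Hypothesis discrete_D : forall i, discrete tau (D i).
Hypothesis cover_D : forall x, exists i, D i x.

Definition layer (i : I) (n : nat) : set T := isolated_layer (D i) (G n).

Lemma layers_cover x : exists i n, layer i n x.
Proof.
  destruct (cover_D x) as [i Hi].
  destruct (layer_cover tau (D i) G x (discrete_D i) development_G Hi) as [n Hn].
  exists i, n. exact Hn.
Qed.

Definition small_open_set :=
  exists U, is_open tau U /\ (exists x, U x) /\ inj {x | U x} I.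

(* Countable I: some layer is dense in a nonempty open V, hence (being closed)
   contains V; an isolating neighbourhood of a point of that layer then meets
   V in a single point. *)
Lemma countable_index_case :
  hausdorff tau -> inj I nat -> small_open_set.
Proof.
  intros Hh HI.
  assert (HJ : inj (I * nat) nat).
  { apply (inj_trans _ (nat * nat)); [apply inj_prod; auto using inj_refl | apply inj_nat_nat]. }
  destruct (baire_countable_cover tau x0 _ (fun p => layer (fst p) (snd p)) baire_tau HJ)
    as [[i m] [V [Vo [[v Vv] HV]]]].
  { intro x. destruct (layers_cover x) as [i [m H]]. exists (i, m). exact H. }
  assert (Hcd : closed_discrete tau (layer i m)).
  { apply layer_closed_discrete; [exact Hh | apply (proj1 development_G)]. }
  assert (HVE : subset V (layer i m)) by (apply (dense_in_closed tau); [apply Hcd | exact HV]).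
  destruct (proj2 Hcd v (HVE v Vv)) as [U [Uo [Uv HU]]].
  exists (fun z => U z /\ V z). split; [apply open_inter; auto | split; [exists v; auto |]].
  exists (fun _ => i). intros [a [Ua Va]] [b [Ub Vb]] _. apply sig_eq; simpl.
  rewrite (HU a Ua (HVE a Va)), (HU b Ub (HVE b Vb)). reflexivity.
Qed.

Hypothesis uncountable_I : ~ inj I nat.
Variable U : I * nat -> T -> set T.
Hypothesis expansion_U : forall p, expansion tau (layer (fst p) (snd p)) (U p).

Lemma square_I : inj (I * I) I.
Proof. apply inf_square, uncountable_infinite, uncountable_I. Qed.

Lemma trace_small (p : I * nat) (s : T) :
  inj {d | layer (fst p) (snd p) d /\ U p d s} I.
Proof. apply omega1_inj; [exact uncountable_I | apply (proj2 (expansion_U p))]. Qed.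

Definition refined_layer (i : I) (m k : nat) : set T :=
  fun d => layer i m d /\ subset (star d (G k)) (U (i, m) d).

Lemma refined_layers_cover x :
  exists mk : nat * nat, exists i, refined_layer i (fst mk) (snd mk) x.
Proof.
  destruct (layers_cover x) as [i [m Hx]].
  destruct (proj1 (expansion_U (i, m)) x Hx) as [Uo [Ux _]].
  destruct (proj2 development_G x _ Uo Ux) as [k Hk]. exists (m, k), i. split; auto.
Qed.

(* The points of the (m, k)-refined layers within st(x, G k) number at most
   |I|: such a y satisfies x in U (i, m) y. *)
Lemma star_small m k x :
  inj {y | star x (G k) y /\ exists i, refined_layer i m k y} I.
Proof.
  apply (union_inj _ I I (fun i y => layer i m (proj1_sig y) /\ U (i, m) (proj1_sig y) x)).
  - exact square_I.
  - apply inj_refl.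
  - intro i. apply (inj_trans _ _ _ (inj_sub_sub _ _ _) (trace_small (i, m) x)).
  - intros [y [Hxy [i [Hy Hsub]]]]. exists i. split; [exact Hy |].
    apply Hsub, star_sym, Hxy.
Qed.

(* If S is dense in W and |S| <= |I|, then |W| <= |I|: every w in W lies in
   some layer, and U (i, m) w meets S at a point s, so w is among the at most
   |I| points d with s in U (i, m) d. *)
Lemma dense_bound (W S : set T) :
  (forall O, is_open tau O -> (exists y, O y /\ W y) -> exists y, O y /\ S y) ->
  inj {y | S y} I -> inj {w | W w} I.
Proof.
  intros HSd HS.
  apply (union_inj _ ((I * nat) * {y | S y}) I
          (fun p w => layer (fst (fst p)) (snd (fst p)) (proj1_sig w) /\
                      U (fst p) (proj1_sig w) (proj1_sig (snd p)))).
  - exact square_I.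
  - apply (inj_trans _ (I * I)); [apply inj_prod; [| exact HS] | exact square_I].
    apply (inj_trans _ (I * I)); [| exact square_I].
    apply inj_prod; [apply inj_refl | apply uncountable_infinite, uncountable_I].
  - intros [p s]. apply (inj_trans _ _ _ (inj_sub_sub _ _ _) (trace_small p (proj1_sig s))).
  - intros [w Ww]. destruct (layers_cover w) as [i [m Hw]].
    destruct (proj1 (expansion_U (i, m)) w Hw) as [Uo [Uw _]].
    destruct (HSd _ Uo (ex_intro _ w (conj Uw Ww))) as [s [Us Ss]].
    exists ((i, m), exist _ s Ss). simpl. auto.
Qed.

(* Uncountable I: some union of refined layers M is dense in a nonempty open V;
   for x in V, W = V ∩ st(x, G k) is a nonempty open set in which W ∩ M is
   dense and, by star_small, of size at most |I|. *)
Lemma uncountable_index_case : small_open_set.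
Proof.
  set (M mk y := exists i, refined_layer i (fst mk) (snd mk) y).
  destruct (baire_countable_cover tau x0 _ M baire_tau inj_nat_nat refined_layers_cover)
    as [[m k] [V [Vo [[x Vx] HV]]]].
  assert (Gk : open_cover tau (G k)) by apply (proj1 development_G).
  set (W y := V y /\ star x (G k) y).
  exists W. split; [apply open_inter; [exact Vo | exact (star_open tau _ x Gk)] |].
  split; [exists x; split; [exact Vx | exact (star_self tau _ x Gk)] |].
  apply (dense_bound W (fun y => W y /\ M (m, k) y)).
  - intros O Oo HO.
    destruct (dense_in_restrict tau V (M (m, k)) _ HV (star_open tau _ x Gk) O Oo HO)
      as [y [Oy [Wy My]]].
    exists y; auto.
  - apply (inj_trans _ _ _ (inj_sub_mono _ _ _ (fun y Hy => conj (proj2 (proj1 Hy)) (proj2 Hy)))).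
    exact (star_small m k x).
Qed.

End Dispersion.

Theorem theorem1 (T : Type) (tau : topology T) (x0 : T) :
  hausdorff tau -> baire tau -> developable tau -> omega1_expandable tau ->
  forall (I : Type) (D : I -> set T),
    (forall i, discrete tau (D i)) ->
    (forall x, exists i, D i x) ->
    exists U : set T, is_open tau U /\ (exists x, U x) /\
      exists f : {x : T | U x} -> I, forall a b, f a = f b -> a = b.
Proof.
  intros Hh Hb [G HG] Hexp I D Hdisc Hcov.
  destruct (classic (inj I nat)) as [Hcount|Hunc].
  - exact (countable_index_case tau x0 Hb G HG I D Hdisc Hcov Hh Hcount).
  -
    assert (Hlayer : forall p : I * nat, exists Up, expansion tau (layer G I D (fst p) (snd p)) Up).
    { intro p. apply Hexp, layer_closed_discrete; [exact Hh | apply (proj1 HG)]. }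
    destruct (choice _ Hlayer) as [U HU].
    exact (uncountable_index_case tau x0 Hb G HG I D Hdisc Hcov Hunc U HU).
Qed.
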